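(* Let $\delta>0$, let $X$ be a geodesic $\delta$--hyperbolic space, and let the group $G$ act $(\kappa_0,N_0)$--acylindrically on $X$ with $\kappa_0\geqslant\delta$; put $\rho_0:=\delta/N_0$ and $c:=\frac1{10^6}\cdot\frac{\rho_0}{\kappa_0}$. Let $U\subset G$ be finite, let $x_0\in X$ be a point with $\frac1{|U|}\sum_{u\in U}|ux_0-x_0|\leqslant E(U)+\delta$, let $U_1:=\{u\in U\mid|ux_0-x_0|\leqslant\kappa_0\}$ and $\lambda_0(U):=\max_{u\in U}|ux_0-x_0|$. If $|U_1|\geqslant\frac14|U|$ and $\lambda_0(U)\geqslant10^4\kappa_0$, then for all natural numbers $n\geqslant1$, $$|U^n|\geqslant\left(\frac c4|U|\right)^{[(n+1)/2]}.$$
   Context: Distance $|x-y|$; Gromov product $(p,q)_x=\frac12(|p-x|+|q-x|-|p-q|)$; $X$ is $\delta$--hyperbolic if $(p,r)_x\geqslant\min\{(p,q)_x,(q,r)_x\}-\delta$ for all $p,q,r,x$. The action is $(\kappa_0,N_0)$--acylindrical ($N_0\geqslant1$) if for all $x,y$ with $|x-y|\geqslant\kappa_0$ at most $N_0$ elements $g\in G$ satisfy $|gx-x|\leqslant100\delta$ and $|gy-y|\leqslant100\delta$. $E(U):=\inf_{x\in X}\frac1{|U|}\sum_{u\in U}|ux-x|$. $U^n$ is the set of products of $n$ elements of $U$; $[x]$ is the integral part. *)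

From HB Require Import structures.
From mathcomp Require Import all_boot all_order all_algebra.
From mathcomp Require Import boolp classical_sets reals.
Set Implicit Arguments. Unset Strict Implicit. Unset Printing Implicit Defensive.
Import Order.TTheory GRing.Theory Num.Theory.
Local Open Scope ring_scope.

Definition is_group (G : Type) (mul : G -> G -> G) (one : G) (inv : G -> G) : Prop :=
  [/\ (forall a b c, mul a (mul b c) = mul (mul a b) c),
      (forall a, mul one a = a),
      (forall a, mul a one = a),
      (forall a, mul (inv a) a = one) &
      (forall a, mul a (inv a) = one)].

Definition is_metric (R : realType) (X : Type) (d : X -> X -> R) : Prop :=
  [/\ (forall x y, 0 <= d x y),
      (forall x y, d x y = 0 <-> x = y),
      (forall x y, d x y = d y x) &
      (forall x y z, d x z <= d x y + d y z)].

Definition is_geodesic (R : realType) (X : Type) (d : X -> X -> R) : Prop :=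
  forall x y, exists gam : R -> X,
    [/\ gam 0 = x, gam (d x y) = y &
        (forall s t, 0 <= s <= d x y -> 0 <= t <= d x y ->
           d (gam s) (gam t) = `|s - t|)].

Definition gromov (R : realType) (X : Type) (d : X -> X -> R) (p q x : X) : R :=
  (d p x + d q x - d p q) / 2.

Definition is_hyperbolic (R : realType) (X : Type) (d : X -> X -> R) (delta : R) : Prop :=
  forall p q r x,
    Num.min (gromov d p q x) (gromov d q r x) - delta <= gromov d p r x.

Definition is_isometric_action (R : realType) (G X : Type)
  (mul : G -> G -> G) (one : G) (d : X -> X -> R) (act : G -> X -> X) : Prop :=
  [/\ (forall x, act one x = x),
      (forall g h x, act (mul g h) x = act g (act h x)) &
      (forall g x y, d (act g x) (act g y) = d x y)].

(* (kappa0, N0)-acylindrical: for |x-y| >= kappa0, at most N0 elements g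
   satisfy |gx - x| <= 100 delta and |gy - y| <= 100 delta
   (i.e. every duplicate-free list of such elements has length <= N0). *)
Definition is_acylindrical (R : realType) (G : eqType) (X : Type)
  (d : X -> X -> R) (act : G -> X -> X) (delta kappa0 : R) (N0 : nat) : Prop :=
  forall x y, kappa0 <= d x y ->
    forall s : seq G, uniq s ->
      (forall g, g \in s -> d (act g x) x <= 100 * delta /\ d (act g y) y <= 100 * delta) ->
      (size s <= N0)%N.

Fixpoint powseq (G : eqType) (mul : G -> G -> G) (one : G) (U : seq G) (n : nat) : seq G :=
  match n with
  | 0 => [:: one]
  | n'.+1 => undup [seq mul u g | u <- U, g <- powseq mul one U n']
  end.

Definition avg_disp (R : realType) (G X : Type) (d : X -> X -> R) (act : G -> X -> X)
  (U : seq G) (x : X) : R :=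
  (\sum_(u <- U) d (act u x) x) / (size U)%:R.

Definition energy (R : realType) (G X : Type) (d : X -> X -> R) (act : G -> X -> X)
  (U : seq G) : R :=
  inf (range (avg_disp d act U)).

Definition lambda0 (R : realType) (G X : Type) (d : X -> X -> R) (act : G -> X -> X)
  (U : seq G) (x0 : X) : R :=
  \big[Num.max/0]_(u <- U) d (act u x0) x0.

(* Pick s in U with |s x0 - x0| = lambda0(U) and put y = s x0.  For any z, the
   elements t of U1 with (t y, z)_x0 large, sorted into bins of width
   10 delta, differ pairwise within a bin by elements that nearly fix two
   points of [x0, y] at distance >= kappa0; acylindricity thus leaves at most
   M = O(kappa0 / delta) N0 of them.  A greedy choice then gives T in U1 with
   |U1| <= M (1 + |T|) such that the directions of the t y (t in T) are
   pairwise far apart and far from that of s^-1 x0.  By ping-pong in the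
   hyperbolic space the words t1 s t2 s ... tk s (ti in T) are pairwise
   distinct, whence |U^n| >= |T|^[(n+1)/2], while |U1| >= |U| / 4 gives
   c |U| / 4 <= max(1, |T|). *)

From HB Require Import structures.
From mathcomp Require Import all_boot all_order all_algebra.
From mathcomp Require Import boolp classical_sets reals.
From mathcomp Require Import ring lra zify.
Set Implicit Arguments. Unset Strict Implicit. Unset Printing Implicit Defensive.
Import Order.TTheory GRing.Theory Num.Theory.
Local Open Scope ring_scope.

Lemma size_le_mul_fibers (T : eqType) (b : T -> nat) (B N : nat) (s : seq T) :
  {in s, forall x, (b x < B)%N} ->
  (forall i, (size [seq x <- s | b x == i] <= N)%N) -> (size s <= B * N)%N.
Proof.
elim: B s => [|B IH] s b_lt fibers.
  by case: s b_lt {fibers} => // x s /(_ x (mem_head _ _)).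
rewrite -(count_predC (fun x => b x == B) s) mulSn.
apply: leq_add; first by rewrite -size_filter; exact: fibers.
rewrite -size_filter; apply: IH => [x|i].
  by rewrite mem_filter /= => /andP[neq /b_lt]; rewrite ltnS leq_eqVlt (negPf neq).
rewrite -filter_predI size_filter (leq_trans _ (fibers i)) // size_filter.
by apply: sub_count => x /= /andP[].
Qed.

Lemma greedy_independent_subseq (T : eqType) (conf : rel T) (M : nat) (l : seq T) :
  uniq l -> symmetric conf -> reflexive conf ->
  {in l, forall x, (size [seq y <- l | conf x y] <= M)%N} ->
  exists2 I : seq T, [/\ uniq I, {subset I <= l} &
      {in I &, forall x y, x != y -> ~~ conf x y}] & (size l <= size I * M)%N.
Proof.
move=> + conf_sym conf_refl.
elim: {l}(size l) {-2}l (leqnn (size l)) => [|n IH] [|x l] //= size_l.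
- by move=> *; exists [::].
- by move=> *; exists [::].
case/andP=> x_l uniq_l deg.
set rest := [seq y <- l | ~~ conf x y].
have [I [uniq_I sub_I indep_I] size_rest] : exists2 I : seq T,
    [/\ uniq I, {subset I <= rest} & {in I &, forall x y, x != y -> ~~ conf x y}]
    & (size rest <= size I * M)%N.
  apply: IH; [|exact: filter_uniq|].
    by rewrite size_filter (leq_trans (count_size _ _)).
  move=> z; rewrite mem_filter => /andP[_ z_l].
  apply: leq_trans (deg z _); last by rewrite inE z_l orbT.
  rewrite size_filter count_filter.
  apply: (@leq_trans (count (conf z) l)); first by apply: sub_count => w /andP[].
  by case: (conf z x); rewrite /= size_filter ?leqnSn.
have x_I : x \notin I by apply/negP => /sub_I; rewrite mem_filter conf_refl.
exists (x :: I); first split.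
- by rewrite /= x_I uniq_I.
- move=> z; rewrite !inE => /orP[->//|/sub_I].
  by rewrite mem_filter => /andP[_ ->]; rewrite orbT.
- move=> a b; rewrite !inE => /orP[/eqP->|a_I] /orP[/eqP->|b_I].
  + by rewrite eqxx.
  + by move: (sub_I _ b_I); rewrite mem_filter => /andP[].
  + by move: (sub_I _ a_I); rewrite mem_filter conf_sym => /andP[].
  + exact: indep_I.
have deg_x : (count (conf x) l < M)%N.
  by have := deg x (mem_head _ _); rewrite conf_refl /= size_filter.
have count_rest : (count (predC (conf x)) l <= size I * M)%N.
  by rewrite -size_filter; exact: size_rest.
have := count_predC (conf x) l; rewrite /= mulSn; lia.
Qed.

Lemma truncn_eq_distr_lt1 (R : realType) (x x' : R) : 0 <= x -> 0 <= x' ->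
  Num.truncn x = Num.truncn x' -> `|x - x'| < 1.
Proof.
move=> x_ge0 x'_ge0 eq_trunc.
have := truncnS_gt x; have := truncnS_gt x'; rewrite eq_trunc -natr1.
have := truncn_le x; have := truncn_le x'; rewrite x_ge0 x'_ge0 eq_trunc.
by move=> *; rewrite ltr_norml; apply/andP; split; lra.
Qed.

Section Words.
Variable T : eqType.

Fixpoint words (A : seq T) (k : nat) : seq (seq T) :=
  if k is k'.+1 then [seq t :: w | t <- A, w <- words A k'] else [:: [::]].

Lemma size_words A k : size (words A k) = (size A ^ k)%N.
Proof. by elim: k => [|k IH] //=; rewrite size_allpairs IH expnS. Qed.

Lemma words_uniq A k : uniq A -> uniq (words A k).
Proof.
move=> A_uniq; elim: k => [|k IH] //=.
by apply: allpairs_uniq => // -[t w] [t' w'] _ _ [-> ->].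
Qed.

Lemma mem_words A k w : w \in words A k -> size w = k /\ all (mem A) w.
Proof.
elim: k w => [|k IH] w /=; first by rewrite inE => /eqP->.
case/allpairsP => -[t w'] [t_A w'_in ->] /=.
by have [-> ->] := IH _ w'_in; rewrite t_A.
Qed.

End Words.

Lemma bigmax_ge_witness (R : realDomainType) (T : eqType) (F : T -> R) (U : seq T) c :
  0 < c -> c <= \big[Num.max/0]_(u <- U) F u -> exists2 u, u \in U & c <= F u.
Proof.
move=> c_gt0; elim: U => [|u U IH]; first by rewrite big_nil leNgt c_gt0.
rewrite big_cons le_max => /orP[|/IH[v v_U c_le]]; first by exists u; rewrite ?mem_head.
by exists v; rewrite // inE v_U orbT.
Qed.

(* c M <= 1/2 for c = 10^-6 delta / (N0 kappa0), hence
   c u / 4 <= c M (1 + T) <= (1 + T) / 2. *)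
Lemma growth_base_le (R : realType) (delta kappa0 u T M : R) (N0 : nat) :
  0 < delta -> delta <= kappa0 -> (0 < N0)%N -> 0 <= u -> 0 <= T ->
  M <= (2 * (2 * kappa0) / (10 * delta) + 1) * N0%:R -> u / 4 <= M + T * M ->
  0 <= 1 / 10 ^+ 6 * (delta / N0%:R / kappa0) / 4 * u <= Num.max 1 T.
Proof.
move=> delta_gt0 delta_le N0_gt0 u_ge0 T_ge0 M_le u_le.
have kappa0_gt0 : 0 < kappa0 by lra.
have N0_ge1 : 1 <= N0%:R :> R by rewrite ler1n.
set c := 1 / 10 ^+ 6 * (delta / N0%:R / kappa0).
have c_ge0 : 0 <= c.
  by rewrite /c !(mulr_ge0, divr_ge0, invr_ge0, exprn_ge0, ler0n) //; lra.
have cM : c * M <= 1 / 2.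
  apply: le_trans (ler_wpM2l c_ge0 M_le) _.
  have -> : c * ((2 * (2 * kappa0) / (10 * delta) + 1) * N0%:R) =
      (4 / 10 + delta / kappa0) / 10 ^+ 6.
    rewrite /c; field; rewrite pnatr_eq0 -lt0n N0_gt0 andbT.
    by apply/andP; split; apply/eqP; lra.
  have : delta / kappa0 <= 1 by rewrite ler_pdivrMr // mul1r.
  rewrite !exprS expr0; lra.
have : c * (u / 4) <= c * M * (1 + T).
  by rewrite (_ : c * M * (1 + T) = c * (M + T * M)) ?ler_wpM2l //; ring.
have : c * M * (1 + T) <= 1 / 2 * (1 + T) by apply: ler_wpM2r => //; lra.
have : 1 / 2 * (1 + T) <= Num.max 1 T.
  by rewrite le_max; case: (lerP 1 T) => ?; apply/orP; [right|left]; lra.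
rewrite mulr_ge0 ?divr_ge0 //=; lra.
Qed.

Lemma max1_exprn_le (R : realDomainType) (x y : R) k :
  1 <= y -> x ^+ k <= y -> Num.max 1 x ^+ k <= y.
Proof. by move=> y_ge1 xk_le; case: (lerP 1 x) => _ //; rewrite expr1n. Qed.

Definition geodesic_segment {R : realType} {X : Type} (d : X -> X -> R)
    (x y : X) (gam : R -> X) : Prop :=
  [/\ gam 0 = x, gam (d x y) = y &
      forall s t, 0 <= s <= d x y -> 0 <= t <= d x y -> d (gam s) (gam t) = `|s - t|].

Section MetricGeometry.
Variables (R : realType) (X : Type) (d : X -> X -> R).
Hypothesis d_metric : is_metric d.

Local Notation gp := (gromov d).

Lemma metricxx x : d x x = 0. Proof. by case: d_metric => _ h _ _; apply/h. Qed.
Lemma metricC x y : d x y = d y x. Proof. by case: d_metric. Qed.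
Lemma metric_triangle x y z : d x z <= d x y + d y z. Proof. by case: d_metric. Qed.

Lemma gromovC p q x : gp p q x = gp q p x.
Proof. by rewrite /gromov (metricC p q) (addrC (d p x)). Qed.

Lemma gromov_ge0 p q x : 0 <= gp p q x.
Proof. have := metric_triangle p x q; rewrite /gromov (metricC x q); lra. Qed.

Lemma gromov_le_dist p q x : gp p q x <= d p x.
Proof. have := metric_triangle q p x; rewrite /gromov (metricC q p); lra. Qed.

Lemma gromov_le_distr p q x : gp p q x <= d x q.
Proof. by rewrite gromovC metricC gromov_le_dist. Qed.

Lemma gromov_move_base p q x x' : gp p q x - d x x' <= gp p q x'.
Proof.
have := metric_triangle p x' x; have := metric_triangle q x' x.
have := metricC x x'; rewrite /gromov; lra.
Qed.

Lemma gromov_move_right p q q' x : gp p q x <= gp p q' x + d q q'.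
Proof.
have := metric_triangle q q' x; have := metric_triangle p q q'; rewrite /gromov; lra.
Qed.

Lemma gromov_exchange p q x : gp p q x + gp x q p = d p x.
Proof.
have := metricC x p; have := metricC q p; have := metricC q x; rewrite /gromov; lra.
Qed.

Section Geodesic.
Variables (x y : X) (gam : R -> X).
Hypothesis gam_seg : geodesic_segment d x y gam.

Lemma segment_dist s t : 0 <= s -> s <= t -> t <= d x y ->
  d (gam s) (gam t) = t - s.
Proof.
case: gam_seg => _ _ iso s0 st ty.
rewrite iso 1?distrC ?ger0_norm ?subr_ge0 //; apply/andP; split; lra.
Qed.

Lemma segment_dist_start r : 0 <= r <= d x y -> d x (gam r) = r.
Proof.
case/andP=> r0 ry; have := segment_dist (lexx 0) r0 ry.
by case: gam_seg => -> _ _; rewrite subr0.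
Qed.

Lemma segment_dist_end r : 0 <= r <= d x y -> d (gam r) y = d x y - r.
Proof.
case/andP=> r0 ry; have := segment_dist r0 ry (lexx _).
by case: gam_seg => _ ->.
Qed.

Lemma segment_dist_abs s t : 0 <= s <= d x y -> 0 <= t <= d x y ->
  d (gam s) (gam t) = `|s - t|.
Proof. by case: gam_seg => _ _; apply. Qed.

End Geodesic.

Section Hyperbolic.
Variable delta : R.
Hypothesis d_hyp : is_hyperbolic d delta.
Hypothesis delta_ge0 : 0 <= delta.

Lemma hyperbolic_min p q r x a :
  a <= gp p q x -> a <= gp q r x -> a - delta <= gp p r x.
Proof.
move=> h1 h2; have := d_hyp p q r x.
have : a <= Num.min (gp p q x) (gp q r x) by rewrite le_min h1 h2.
lra.
Qed.

Lemma dist_segment_proj x y gam p : geodesic_segment d x y gam ->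
  let t := gp p y x in 0 <= t <= d x y /\ d p (gam t) <= gp x y p + 2 * delta.
Proof.
move=> seg t; have t_in : 0 <= t <= d x y by rewrite gromov_ge0 gromov_le_distr.
split=> //.
have xt := segment_dist_start seg t_in; have ty := segment_dist_end seg t_in.
have t_py : t <= gp p y x by [].
have t_yt : t <= gp y (gam t) x.
  by rewrite /gromov (metricC y (gam t)) ty (metricC (gam t)) xt (metricC y); lra.
have := hyperbolic_min t_py t_yt.
have := metricC p x; have := metricC y x; have := metricC y p.
rewrite /gromov (metricC (gam t) x) xt (metricC p (gam t)) /t /gromov; lra.
Qed.

(* The first three hypotheses say that p lies on a geodesic [x', y'] as long
   as [x, y], at distance r from x'. *)
Lemma gromov_fellow_le x y x' y' p a R1 r :
  d x' y' = d x y -> d x' p = r -> d p y' = d x y - r ->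
  d x' x <= a -> R1 <= gp y' y x ->
  a + 2 * delta < r -> r < R1 - a - 2 * delta -> gp x y p <= 2 * delta.
Proof.
move=> x'y' x'p py' x'x R1_le r_gt r_lt; rewrite leNgt; apply/negP => e_gt.
set m := Num.min (gp x y p) (Num.min (R1 - r - a) (r - a)).
have m_e : m <= gp x y p by rewrite /m ge_min lexx.
have m_R1 : m <= R1 - r - a by rewrite /m !ge_min lexx orbT.
have m_r : m <= r - a by rewrite /m !ge_min lexx !orbT.
have m_gt : 2 * delta < m by rewrite /m !lt_min e_gt /=; apply/andP; split; lra.
have m_yy' : m <= gp y y' p.
  have := metric_triangle y p x; have := metric_triangle p x' x.
  have := metric_triangle y' x' x.
  have := metricC y x; have := metricC p x'; have := metricC y' x'.
  have := metricC y y'; have := metricC y' p.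
  move: R1_le; rewrite /gromov; lra.
have m_xy' := hyperbolic_min m_e m_yy'.
have m_x'x : m - delta <= gp x' x p.
  have := metric_triangle x' x p; have := delta_ge0; rewrite /gromov; lra.
have := hyperbolic_min m_x'x m_xy'.
have := metricC y' p; rewrite /gromov; lra.
Qed.

End Hyperbolic.
End MetricGeometry.

Section Group.
Variables (G : eqType) (mul : G -> G -> G) (one : G) (inv : G -> G).
Hypothesis G_group : is_group mul one inv.

Lemma mulGA a b c : mul a (mul b c) = mul (mul a b) c. Proof. by case: G_group. Qed.
Lemma mul1G a : mul one a = a. Proof. by case: G_group. Qed.
Lemma mulG1 a : mul a one = a. Proof. by case: G_group. Qed.
Lemma mulVG a : mul (inv a) a = one. Proof. by case: G_group. Qed.
Lemma mulGV a : mul a (inv a) = one. Proof. by case: G_group. Qed.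

Lemma mulGI a : injective (mul a).
Proof. by move=> b c e; rewrite -(mul1G b) -(mul1G c) -(mulVG a) -!mulGA e. Qed.

Definition interleave (s : G) (ts : seq G) := foldr (fun t w => mul t (mul s w)) one ts.

Fixpoint interleave_in (s : G) (ts : seq G) : G :=
  if ts is t :: ts' then
    (if ts' is [::] then t else mul t (mul s (interleave_in s ts')))
  else one.

Lemma interleave_inMs s ts : ts != [::] -> mul (interleave_in s ts) s = interleave s ts.
Proof.
elim: ts => [//|t [|t' ts] IH] _ /=; first by rewrite mulG1.
by rewrite -!mulGA IH.
Qed.

Lemma mem_powseqS U u g n : u \in U -> g \in powseq mul one U n ->
  mul u g \in powseq mul one U n.+1.
Proof. by move=> u_U g_pow; rewrite /= mem_undup; apply/allpairsP; exists (u, g). Qed.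

Lemma powseq_nonempty U s n : s \in U -> (0 < size (powseq mul one U n))%N.
Proof.
move=> s_U; suff [g] : exists g, g \in powseq mul one U n by case: (powseq _ _ _ _).
elim: n => [|n [g g_pow]]; first by exists one; rewrite inE.
by exists (mul s g); apply: mem_powseqS.
Qed.

Lemma interleave_in_powseq U s ts : s \in U -> ts != [::] -> all (mem U) ts ->
  interleave_in s ts \in powseq mul one U (2 * size ts).-1.
Proof.
move=> s_U; elim: ts => [//|t [|t' ts] IH] _ /andP[t_U ts_U].
  by rewrite /= -[t]mulG1; apply: (mem_powseqS (n := 0)); rewrite ?inE.
have -> : (2 * size [:: t, t' & ts]).-1 = ((2 * size (t' :: ts)).-1).+2 by rewrite /=; lia.
by do 2!apply: mem_powseqS => //; exact: IH.
Qed.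

(* Words of k letters of T separated by s lie in U^(2k-1), and in U^(2k) after
   one more factor s in front. *)
Lemma pingpong_growth U T s n : s \in U -> {subset T <= U} -> uniq T -> (1 <= n)%N ->
  (forall ts ts', all (mem T) ts -> all (mem T) ts' -> size ts = size ts' ->
     interleave s ts = interleave s ts' -> ts = ts') ->
  (size T ^ (n.+1)./2 <= size (powseq mul one U n))%N.
Proof.
move=> s_U T_U T_uniq n_gt0 inj; set k := (n.+1)./2.
have n_eq : n = ((2 * k).-1 + ~~ odd n)%N.
  have := odd_double_half n; rewrite /k /= uphalf_half -mul2n.
  by case: (odd n) => /=; lia.
have k_gt0 : (0 < k)%N by rewrite /k; case: (n) n_gt0.
have w_prop w : w \in words T k -> [/\ size w = k, w != [::] & all (mem U) w].
  case/mem_words => size_w w_T; split => //.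
    by apply/eqP => w_nil; move: k_gt0; rewrite -size_w w_nil.
  by apply/allP => t /(allP w_T) /T_U.
pose f w := if odd n then interleave_in s w else mul s (interleave_in s w).
rewrite -size_words -(size_map f); apply: uniq_leq_size.
  rewrite map_inj_in_uniq ?words_uniq // => w w' w_in w'_in f_eq.
  have [size_w w_nil _] := w_prop w w_in; have [size_w' w'_nil _] := w_prop w' w'_in.
  have /(congr1 (mul^~ s)) : interleave_in s w = interleave_in s w'.
    by move: f_eq; rewrite /f; case: (odd n) => // /(@mulGI s).
  rewrite !interleave_inMs //; apply: inj; rewrite ?size_w ?size_w' //.
  - by case/mem_words: w_in.
  - by case/mem_words: w'_in.
move=> _ /mapP[w w_in ->]; have [size_w w_nil w_U] := w_prop w w_in.
rewrite /f {2}n_eq -size_w; case: (odd n) => /=.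
  by rewrite addn0 interleave_in_powseq.
by rewrite addn1 mem_powseqS // interleave_in_powseq.
Qed.

Section Action.
Variables (R : realType) (X : Type) (d : X -> X -> R) (act : G -> X -> X) (delta : R).
Hypothesis d_metric : is_metric d.
Hypothesis d_hyp : is_hyperbolic d delta.
Hypothesis delta_gt0 : 0 < delta.
Hypothesis G_act : is_isometric_action mul one d act.

Local Notation gp := (gromov d).
Let delta_ge0 : 0 <= delta. Proof. exact: ltW. Qed.

Lemma act1 x : act one x = x. Proof. by case: G_act. Qed.
Lemma actM g h x : act (mul g h) x = act g (act h x). Proof. by case: G_act. Qed.
Lemma dist_act g x y : d (act g x) (act g y) = d x y. Proof. by case: G_act. Qed.

Lemma act_invK g x : act (inv g) (act g x) = x.
Proof. by rewrite -actM mulVG act1. Qed.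

Lemma act_Kinv g x : act g (act (inv g) x) = x.
Proof. by rewrite -actM mulGV act1. Qed.

Lemma dist_actVM h g x : d (act (mul (inv h) g) x) x = d (act g x) (act h x).
Proof. by rewrite -(dist_act h) actM act_Kinv. Qed.

Lemma gromov_act g p q x : gp (act g p) (act g q) (act g x) = gp p q x.
Proof. by rewrite /gromov !dist_act. Qed.

Section Acylindrical.
Variables (kappa0 : R) (N0 : nat).
Hypothesis acyl : is_acylindrical d act delta kappa0 N0.

(* Number of bins of width 10 delta needed to cover [0, 2a], times N0. *)
Definition bin_number (a : R) := ((Num.truncn (2 * a / (10 * delta))).+1 * N0)%N.

Section AlignedElements.
Variables (x0 y : X) (gam : R -> X) (a R1 : R).
Hypothesis gam_seg : geodesic_segment d x0 y gam.
Hypothesis a_ge0 : 0 <= a.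

Definition aligned g := d (act g x0) x0 <= a /\ R1 <= gp (act g y) y x0.

Lemma aligned_translate_near g r : aligned g ->
  a + 2 * delta < r -> r < R1 - a - 2 * delta -> r <= d x0 y ->
  let p := act g (gam r) in let t := gp p y x0 in
  [/\ 0 <= t <= d x0 y, d p (gam t) <= 4 * delta,
      d x0 p - 2 * delta <= t <= d x0 p & r - a <= d x0 p <= r + a].
Proof.
move=> [gx0 gy] r_gt r_lt r_le p t.
have r_in : 0 <= r <= d x0 y by move: (a_ge0) (delta_ge0) => *; apply/andP; split; lra.
have [t_in p_near] := dist_segment_proj d_metric d_hyp p gam_seg.
have p_gromov : gp x0 y p <= 2 * delta.
  apply: (gromov_fellow_le d_metric d_hyp delta_ge0 (x' := act g x0) (y' := act g y)
    (a := a) (R1 := R1) (r := r)) => //.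
  - by rewrite dist_act.
  - by rewrite /p dist_act (segment_dist_start gam_seg).
  - by rewrite /p dist_act (segment_dist_end gam_seg).
have t_add : t + gp x0 y p = d x0 p.
  have := metricC d_metric p x0; have := metricC d_metric y p.
  have := metricC d_metric y x0; rewrite /t /gromov; lra.
have := gromov_ge0 d_metric x0 y p.
have px0 : d (act g x0) p = r by rewrite /p dist_act (segment_dist_start gam_seg).
have := metric_triangle d_metric x0 (act g x0) p.
have := metric_triangle d_metric (act g x0) x0 p.
have := metricC d_metric x0 (act g x0).
by move=> *; split => //; try (apply/andP; split); lra.
Qed.

Hypothesis R1_large : 4 * a + 16 * delta < R1.
Hypothesis y_far : 3 * a + 14 * delta <= d x0 y.

Let r1 := a + 3 * delta.
Let r2 := 3 * a + 14 * delta.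

Let r1_range : [/\ a + 2 * delta < r1, r1 < R1 - a - 2 * delta & r1 <= d x0 y].
Proof.
by move: (R1_large) (y_far) (a_ge0) (delta_gt0) => *; rewrite /r1; split; lra.
Qed.

Let r2_range : [/\ a + 2 * delta < r2, r2 < R1 - a - 2 * delta & r2 <= d x0 y].
Proof.
by move: (R1_large) (y_far) (a_ge0) (delta_gt0) => *; rewrite /r2; split; lra.
Qed.

Lemma aligned_translate_proj g : aligned g ->
  let p1 := act g (gam r1) in let p2 := act g (gam r2) in
  let t1 := gp p1 y x0 in let t2 := gp p2 y x0 in
  [/\ 2 * a + 3 * delta <= t2 - t1 <= 2 * a + 19 * delta,
      d p1 (gam t1) <= 4 * delta, d p2 (gam t2) <= 4 * delta
    & d x0 p1 - 2 * delta <= t1 <= d x0 p1].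
Proof.
move=> g_al p1 p2 t1 t2; move: (a_ge0) (delta_gt0) (y_far) => ? ? ?.
case: r1_range => r1_gt r1_lt r1_le; case: r2_range => r2_gt r2_lt r2_le.
have [t1_in p1_near /andP[t1_ge t1_le] /andP[_ p1_le]] :=
  aligned_translate_near g_al r1_gt r1_lt r1_le.
have [t2_in p2_near /andP[t2_ge t2_le] /andP[p2_ge _]] :=
  aligned_translate_near g_al r2_gt r2_lt r2_le.
rewrite -/p1 -/t1 in t1_in p1_near t1_ge t1_le p1_le.
rewrite -/p2 -/t2 in t2_in p2_near t2_ge t2_le p2_ge.
have p1p2 : d p1 p2 = 2 * a + 11 * delta.
  by rewrite dist_act (segment_dist gam_seg); rewrite /r1 /r2; lra.
have t1t2 : d (gam t1) (gam t2) = t2 - t1.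
  case/andP: t1_in => ? _; case/andP: t2_in => _ ?.
  apply: (segment_dist gam_seg) => //; rewrite /r1 /r2 in p1_le p2_ge; lra.
have := metric_triangle d_metric p1 (gam t1) p2.
have := metric_triangle d_metric (gam t1) (gam t2) p2.
have := metric_triangle d_metric (gam t1) p1 (gam t2).
have := metric_triangle d_metric p1 p2 (gam t2).
have := metricC d_metric (gam t1) p1; have := metricC d_metric (gam t2) p2.
by move=> *; split => //; apply/andP; split; lra.
Qed.

Lemma aligned_translates_close g g' : aligned g -> aligned g' ->
  `|d x0 (act g (gam r1)) - d x0 (act g' (gam r1))| < 10 * delta ->
  d (act g (gam r1)) (act g' (gam r1)) <= 36 * delta /\
  d (act g (gam r2)) (act g' (gam r2)) <= 36 * delta.
Proof.
move=> g_al g'_al; rewrite ltr_norml => /andP[close1 close2].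
have [/andP[gap1 gap2] near1 near2 /andP[t1_ge t1_le]] := aligned_translate_proj g_al.
have [/andP[gap1' gap2'] near1' near2' /andP[t1_ge' t1_le']] :=
  aligned_translate_proj g'_al.
set p1 := act g (gam r1) in near1 t1_ge t1_le close1 close2 *.
set p2 := act g (gam r2) in near2 *.
set p1' := act g' (gam r1) in near1' t1_ge' t1_le' close1 close2 *.
set p2' := act g' (gam r2) in near2' *.
set t1 := gp p1 y x0 in gap1 gap2 near1 t1_ge t1_le.
set t2 := gp p2 y x0 in gap1 gap2 near2.
set t1' := gp p1' y x0 in gap1' gap2' near1' t1_ge' t1_le'.
set t2' := gp p2' y x0 in gap1' gap2' near2'.
have proj_in (p : X) : 0 <= gp p y x0 <= d x0 y.
  by rewrite gromov_ge0 // gromov_le_distr.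
have d1 : d (gam t1) (gam t1') <= 12 * delta.
  by rewrite (segment_dist_abs gam_seg) ?proj_in // ler_norml; apply/andP; split; lra.
have d2 : d (gam t2) (gam t2') <= 28 * delta.
  by rewrite (segment_dist_abs gam_seg) ?proj_in // ler_norml; apply/andP; split; lra.
have := metric_triangle d_metric p1 (gam t1) p1'.
have := metric_triangle d_metric (gam t1) (gam t1') p1'.
have := metricC d_metric (gam t1') p1'.
have := metric_triangle d_metric p2 (gam t2) p2'.
have := metric_triangle d_metric (gam t2) (gam t2') p2'.
have := metricC d_metric (gam t2') p2'.
by move=> *; split; lra.
Qed.

(* Sort the translates by the distance from x0 to g (gam r1) into bins of
   width 10 delta; within a bin, k^-1 g moves both gam r1 and gam r2 by at
   most 36 delta, so acylindricity bounds the size of each bin by N0. *)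
Lemma aligned_count (gs : seq G) : kappa0 <= 2 * a + 11 * delta -> uniq gs ->
  {in gs, forall g, aligned g} -> (size gs <= bin_number a)%N.
Proof.
move=> kappa0_le gs_uniq gs_al; move: (a_ge0) (delta_gt0) (y_far) => ? ? ?.
pose v g := (d x0 (act g (gam r1)) - (r1 - a)) / (10 * delta).
have v_range g : aligned g -> 0 <= v g <= 2 * a / (10 * delta).
  case: r1_range => r1_gt r1_lt r1_le g_al.
  have [_ _ _ /andP[p_ge p_le]] := aligned_translate_near g_al r1_gt r1_lt r1_le.
  rewrite /v ler_pM2r ?invr_gt0 ?pmulr_rgt0 // divr_ge0 ?subr_ge0 ?mulr_ge0 //.
  by apply/andP; split; lra.
apply: (@size_le_mul_fibers _ (fun g => Num.truncn (v g))) => [g g_in | i].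
  by rewrite ltnS; apply: le_truncn; case/andP: (v_range g (gs_al g g_in)).
set bin := [seq g <- gs | _].
have bin_al g : g \in bin -> aligned g /\ Num.truncn (v g) = i.
  by rewrite mem_filter => /andP[/eqP-> g_in]; split => //; exact: gs_al.
case bin_eq: bin => [//|k bin']; rewrite -bin_eq.
have /bin_al [k_al k_bin] : k \in bin by rewrite bin_eq mem_head.
rewrite -(size_map (mul (inv k))).
apply: (@acyl (gam r1) (gam r2)).
- by rewrite (segment_dist gam_seg); rewrite /r1 /r2; lra.
- by rewrite map_inj_uniq ?filter_uniq //; exact: mulGI.
move=> _ /mapP[g g_bin ->]; rewrite !dist_actVM.
have [g_al g_bin'] := bin_al g g_bin.
have close : `|d x0 (act g (gam r1)) - d x0 (act k (gam r1))| < 10 * delta.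
  have := truncn_eq_distr_lt1 (proj1 (andP (v_range g g_al)))
    (proj1 (andP (v_range k k_al))) (etrans g_bin' (esym k_bin)).
  have -> : v g - v k = (d x0 (act g (gam r1)) - d x0 (act k (gam r1))) / (10 * delta).
    by rewrite /v; ring.
  have bin_width : 0 < 10 * delta by lra.
  by rewrite normrM normfV (gtr0_norm bin_width) ltr_pdivrMr // mul1r.
have [] := aligned_translates_close g_al k_al close; split; lra.
Qed.

End AlignedElements.

Hypothesis X_geodesic : is_geodesic d.
Hypothesis delta_le_kappa0 : delta <= kappa0.

(* For the first element t0 of ts, every t0^-1 t is aligned along [x0, y]
   with a = 2 kappa0 and R1 = 29 kappa0 - delta. *)
Lemma direction_count x0 y z ts : 100 * kappa0 <= d x0 y -> uniq ts ->
  {in ts, forall t, d (act t x0) x0 <= kappa0 /\ 30 * kappa0 < gp (act t y) z x0} ->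
  (size ts <= bin_number (2 * kappa0))%N.
Proof.
move=> y_far ts_uniq ts_dir; move: (delta_gt0) (delta_le_kappa0) => ? ?.
case: ts ts_uniq ts_dir => [//|t0 ts] ts_uniq ts_dir.
have [t0_x0 t0_y] := ts_dir t0 (mem_head _ _).
have [gam gam_seg] := X_geodesic x0 y.
rewrite -(size_map (mul (inv t0))).
apply: (aligned_count (a := 2 * kappa0) (R1 := 29 * kappa0 - delta) gam_seg);
  try lra; first by rewrite map_inj_uniq //; exact: mulGI.
move=> _ /mapP[t t_in ->]; have [t_x0 t_y] := ts_dir t t_in; split.
  have := metric_triangle d_metric (act t x0) x0 (act t0 x0).
  by rewrite dist_actVM (metricC d_metric x0); lra.
have -> : gp (act (mul (inv t0) t) y) y x0 = gp (act t y) (act t0 y) (act t0 x0).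
  by rewrite -[RHS](gromov_act (inv t0)) !act_invK actM.
have z_t0 : 30 * kappa0 <= gp z (act t0 y) x0 by rewrite (gromovC d_metric); exact: ltW.
have := hyperbolic_min d_hyp (ltW t_y) z_t0.
have := gromov_move_base d_metric (act t y) (act t0 y) x0 (act t0 x0).
have := metricC d_metric x0 (act t0 x0); lra.
Qed.

Lemma bin_number_le a : 0 <= a ->
  (bin_number a)%:R <= (2 * a / (10 * delta) + 1) * N0%:R :> R.
Proof.
move=> a_ge0; have : 0 < 10 * delta by move: (delta_gt0); lra.
move=> width_gt0; rewrite /bin_number natrM -natr1 ler_wpM2r ?ler0n // lerD2r.
by rewrite truncn_le divr_ge0 ?mulr_ge0 // ltW.
Qed.

Lemma conflict_degree x0 y L t : 100 * kappa0 <= d x0 y -> uniq L ->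
  {in L, forall t, d (act t x0) x0 <= kappa0} -> t \in L ->
  (size [seq t' <- L | (t == t') || (30 * kappa0 < gp (act t y) (act t' y) x0)%R]
    <= bin_number (2 * kappa0))%N.
Proof.
move=> y_far L_uniq L_disp t_L; move: (delta_gt0) (delta_le_kappa0) => ? ?.
apply: (direction_count (z := act t y) y_far); first exact: filter_uniq.
move=> t'; rewrite mem_filter => /andP[/orP[/eqP<- | far] t'_L]; last first.
  by split; [exact: L_disp | rewrite (gromovC d_metric)].
split; first exact: L_disp.
have := metric_triangle d_metric (act t y) x0 (act t x0); rewrite dist_act.
have := metricC d_metric x0 (act t x0); have := metricC d_metric y x0.
by have := L_disp t t_L; rewrite /gromov (metricxx d_metric); lra.
Qed.

(* Discard the at most M = bin_number (2 kappa0) elements of U1 pointing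
   towards s^-1 x0, then choose greedily a subset whose directions t (s x0) are
   pairwise far apart: each choice excludes at most M further elements. *)
Lemma pingpong_subset U x0 s :
  let y := act s x0 in let U1 := [seq u <- U | d (act u x0) x0 <= kappa0] in
  uniq U -> 100 * kappa0 <= d x0 y ->
  exists2 T : seq G,
    [/\ uniq T, {subset T <= U1},
        {in T, forall t, gp (act t y) (act (inv s) x0) x0 <= 30 * kappa0} &
        {in T &, forall t t', t != t' -> gp (act t y) (act t' y) x0 <= 30 * kappa0}]
    & (size U1 <= bin_number (2 * kappa0) + size T * bin_number (2 * kappa0))%N.
Proof.
move=> y U1 U_uniq y_far; set M := bin_number (2 * kappa0).
have U1_uniq : uniq U1 by rewrite filter_uniq.
have U1_disp : {in U1, forall t, d (act t x0) x0 <= kappa0}.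
  by move=> t; rewrite mem_filter => /andP[].
pose back t := gp (act t y) (act (inv s) x0) x0 <= 30 * kappa0.
set L := [seq t <- U1 | back t].
have size_U1 : (size U1 <= size L + M)%N.
  rewrite -(count_predC back) -size_filter leq_add2l -size_filter.
  apply: (direction_count (z := act (inv s) x0) y_far); first exact: filter_uniq.
  move=> t; rewrite mem_filter /= /back -ltNge => /andP[t_back t_U1].
  by split => //; exact: U1_disp.
pose conf t t' := (t == t') || (30 * kappa0 < gp (act t y) (act t' y) x0).
have conf_sym : symmetric conf by move=> t t'; rewrite /conf eq_sym (gromovC d_metric).
have conf_refl : reflexive conf by move=> t; rewrite /conf eqxx.
have [T [T_uniq T_L T_indep] size_L] :
    exists2 T : seq G, [/\ uniq T, {subset T <= L} &
      {in T &, forall t t', t != t' -> ~~ conf t t'}] & (size L <= size T * M)%N.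
  apply: greedy_independent_subseq => //; first exact: filter_uniq.
  move=> t t_L; apply: conflict_degree y_far _ _ t_L; first exact: filter_uniq.
  by move=> t'; rewrite mem_filter => /andP[_ /U1_disp].
exists T; last by rewrite addnC; apply: leq_trans size_U1 _; rewrite leq_add2r.
split=> // [t /T_L | t /T_L | t t' t_T t'_T neq_tt'].
- by rewrite mem_filter => /andP[].
- by rewrite mem_filter => /andP[].
by have := T_indep t t' t_T t'_T neq_tt'; rewrite negb_or leNgt => /andP[].
Qed.

End Acylindrical.

Section PingPong.
Variables (s : G) (x0 : X) (T : seq G) (a rho : R).
Let y := act s x0.
Hypothesis T_disp : {in T, forall t, d (act t x0) x0 <= a}.
Hypothesis T_back : {in T, forall t, gp (act t y) (act (inv s) x0) x0 <= rho}.
Hypothesis T_sep : {in T &, forall t t', t != t' -> gp (act t y) (act t' y) x0 <= rho}.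
Hypothesis rho_ge0 : 0 <= rho.
Hypothesis a_ge0 : 0 <= a.
Hypothesis y_far : 2 * rho + 2 * delta + 3 * a < d x0 y.

Let cone := d x0 y - (rho + delta + 2 * a).

Lemma interleave_step_cone t V : t \in T ->
  gp (act V x0) (act (inv s) (act (inv t) x0)) x0 <= rho + delta + a ->
  cone <= gp (act (mul t (mul s V)) x0) (act t y) x0.
Proof.
move=> t_T V_out; set u := act (inv s) (act (inv t) x0).
have ts_u : act (mul t s) u = x0 by rewrite actM /u !act_Kinv.
have ts_x0 : act (mul t s) x0 = act t y by rewrite actM.
have ts_V : act (mul t s) (act V x0) = act (mul t (mul s V)) x0 by rewrite !actM.
have := gromov_act (mul t s) x0 (act V x0) u; rewrite ts_u ts_x0 ts_V => moved.
have u_x0 : d u x0 = d x0 (act t y) by rewrite -(dist_act (mul t s)) ts_u ts_x0.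
have := metric_triangle d_metric (act t x0) x0 (act t y); rewrite dist_act.
have := gromov_exchange d_metric u (act V x0) x0.
have := gromovC d_metric (act V x0) u x0.
have := gromovC d_metric (act (mul t (mul s V)) x0) (act t y) x0.
have := T_disp t_T; rewrite /cone; lra.
Qed.

Lemma interleave_cone t ts : t \in T -> all (mem T) ts ->
  cone <= gp (act (interleave s (t :: ts)) x0) (act t y) x0.
Proof.
elim: ts t => [|t' ts IH] t t_T ts_T; apply: interleave_step_cone => //.
  rewrite /= act1 /gromov (metricxx d_metric).
  have := metricC d_metric x0 (act (inv s) (act (inv t) x0)).
  move: (rho_ge0) (a_ge0) (delta_gt0); lra.
case/andP: ts_T => t'_T ts_T; have V_cone := IH t' t'_T ts_T.
set V := interleave s (t' :: ts) in V_cone *.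
set w := act (inv s) x0.
have V_w : gp (act V x0) w x0 <= rho + delta.
  rewrite leNgt; apply/negP => V_w.
  set m := Num.min cone (gp (act V x0) w x0).
  have m_t' : m <= gp (act t' y) (act V x0) x0 by rewrite (gromovC d_metric) ge_min V_cone.
  have m_w : m <= gp (act V x0) w x0 by rewrite ge_min lexx orbT.
  have m_gt : rho + delta < m.
    by rewrite lt_min V_w andbT /cone; move: (y_far) (a_ge0) (delta_gt0); lra.
  have := hyperbolic_min d_hyp m_t' m_w; have := T_back t'_T; rewrite -/w; lra.
have := gromov_move_right d_metric (act V x0) (act (inv s) (act (inv t) x0)) w x0.
have back_t : d (act (inv t) x0) x0 = d (act t x0) x0.
  by rewrite -(dist_act t) act_Kinv (metricC d_metric).
by rewrite /w dist_act back_t; have := T_disp t_T; lra.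
Qed.

Lemma interleave_inj ts ts' : all (mem T) ts -> all (mem T) ts' ->
  size ts = size ts' -> interleave s ts = interleave s ts' -> ts = ts'.
Proof.
elim: ts ts' => [|t ts IH] [|t' ts'] //= /andP[t_T ts_T] /andP[t'_T ts'_T] [size_eq] w_eq.
have eq_tt' : t = t'.
  apply/eqP; apply: contraT => neq_tt'.
  have := interleave_cone t_T ts_T; rewrite /= w_eq (gromovC d_metric) => cone_t.
  have := hyperbolic_min d_hyp cone_t (interleave_cone t'_T ts'_T).
  have := T_sep t_T t'_T neq_tt'; rewrite /cone.
  by move: (y_far) (a_ge0) (delta_gt0) (rho_ge0); lra.
by subst t'; congr (_ :: _); apply: IH => //; apply: (@mulGI s); apply: (@mulGI t).
Qed.

End PingPong.
End Action.
End Group.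

Theorem proposition5p5 (R : realType) (G : eqType) (X : Type)
  (mul : G -> G -> G) (one : G) (inv : G -> G)
  (d : X -> X -> R) (act : G -> X -> X)
  (delta kappa0 : R) (N0 : nat) :
  is_group mul one inv ->
  is_metric d -> is_geodesic d -> 0 < delta -> is_hyperbolic d delta ->
  is_isometric_action mul one d act ->
  (1 <= N0)%N -> is_acylindrical d act delta kappa0 N0 ->
  delta <= kappa0 ->
  let rho0 := delta / N0%:R in
  let c := (1 / 10 ^+ 6) * (rho0 / kappa0) in
  forall (U : seq G) (x0 : X), uniq U ->
  avg_disp d act U x0 <= energy d act U + delta ->
  let U1 := [seq u <- U | d (act u x0) x0 <= kappa0] in
  (size U)%:R / 4 <= (size U1)%:R :> R ->
  10 ^+ 4 * kappa0 <= lambda0 d act U x0 ->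
  forall n : nat, (1 <= n)%N ->
    (c / 4 * (size U)%:R) ^+ (n.+1)./2 <= (size (powseq mul one U n))%:R.
Proof.
move=> G_group d_metric X_geodesic delta_gt0 d_hyp G_act N0_gt0 acyl delta_le_kappa0
  rho0 c U x0 U_uniq _ U1 U1_large lambda0_large n n_gt0.
have kappa0_gt0 : 0 < kappa0 by lra.
have [s s_U s_disp] : exists2 s, s \in U & 10 ^+ 4 * kappa0 <= d (act s x0) x0.
  by apply: bigmax_ge_witness lambda0_large; rewrite pmulr_rgt0 ?exprn_gt0.
have y_far : 100 * kappa0 <= d x0 (act s x0).
  rewrite (metricC d_metric); apply: le_trans s_disp.
  by rewrite ler_pM2r // !exprS expr0; lra.
have [T [T_uniq T_U1 T_back T_sep] U1_le] :=
  pingpong_subset G_group d_metric d_hyp delta_gt0 G_act acyl X_geodesic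
    delta_le_kappa0 U_uniq y_far.
have T_U : {subset T <= U} by move=> t /T_U1; rewrite mem_filter => /andP[].
have T_disp : {in T, forall t, d (act t x0) x0 <= kappa0}.
  by move=> t /T_U1; rewrite mem_filter => /andP[].
have T_inj := interleave_inj G_group d_metric d_hyp delta_gt0 G_act T_disp T_back T_sep
  ltac:(lra) ltac:(lra) ltac:(lra).
have /andP[base_ge0 base_le] : 0 <= c / 4 * (size U)%:R <= Num.max 1 (size T)%:R.
  apply: growth_base_le (bin_number_le delta_gt0 N0 _) _; rewrite ?ler0n //; try lra.
  by apply: le_trans U1_large _; rewrite -natrM -natrD ler_nat.
apply: le_trans (lerXn2r _ base_ge0 _ base_le) _; first by rewrite nnegrE le_max ler01.
apply: max1_exprn_le; first by rewrite ler1n; apply: powseq_nonempty; exact: s_U.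
by rewrite -natrX ler_nat (pingpong_growth G_group s_U T_U T_uniq n_gt0 T_inj).
Qed.
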